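(* Let $0<k<n$ and let $\mu=\delta_n\cdots\delta_{k+1}:[k]\to[n]$ be the face operator $i\mapsto i$. Let $X$ be the pushout of $\Delta[0]\leftarrow\Delta[k]\xrightarrow{\mu}\Delta[n]$, i.e. $\Delta[n]$ with the face spanned by the vertices $0,\dots,k$ collapsed to a point. Then $DX\cong\Delta[n-k]$; more precisely, the map $X\to\Delta[n-k]$ induced by the order-preserving surjection $[n]\to[n-k]$ sending $0,\dots,k$ to $0$ and $i$ to $i-k$ for $i>k$ is, up to isomorphism, $\eta_X$.
   Context: $\delta_j:[n-1]\to[n]$ is the elementary face operator omitting $j$. A simplicial set is non-singular if every non-degenerate simplex has degreewise injective representing map. The desingularization $DX$ is the image of $X\to\prod_f Y$, $x\mapsto(f(x))_f$, over all quotient maps $f:X\to Y$ (maps $X\to X/R$ for operator-compatible families of equivalence relations) with $Y$ non-singular; $\eta_X:X\to DX$ is the corestriction. *)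

From Stdlib Require Import FunctionalExtensionality PropExtensionality ProofIrrelevance.
From HB Require Import structures.
From mathcomp Require Import all_boot.
Set Implicit Arguments. Unset Strict Implicit. Unset Printing Implicit Defensive.

Definition monob m n (f : {ffun 'I_m.+1 -> 'I_n.+1}) :=
  [forall i : 'I_m.+1, forall j : 'I_m.+1, (i <= j) ==> (f i <= f j)].

Record op (m n : nat) := Op { opf :> {ffun 'I_m.+1 -> 'I_n.+1}; opP : monob opf }.
HB.instance Definition _ m n := [isSub for @opf m n].
HB.instance Definition _ m n := [Equality of op m n by <:].

Lemma monobP m n (f : {ffun 'I_m.+1 -> 'I_n.+1}) :
  reflect (forall i j : 'I_m.+1, i <= j -> f i <= f j) (monob f).
Proof.
apply: (iffP forallP) => [H i j hij | H i].
  by have := forallP (H i) j; rewrite hij.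
by apply/forallP => j; apply/implyP; apply: H.
Qed.

Lemma idop_mono n : monob [ffun i : 'I_n.+1 => i].
Proof. by apply/monobP => i j; rewrite !ffunE. Qed.
Definition idop n : op n n := Op (idop_mono n).

Lemma ocomp_mono l m n (g : op m n) (f : op l m) : monob [ffun i => g (f i)].
Proof.
apply/monobP => i j hij; rewrite !ffunE.
by apply: (monobP _ (opP g)); apply: (monobP _ (opP f)).
Qed.
Definition ocomp l m n (g : op m n) (f : op l m) : op l n := Op (ocomp_mono g f).

Lemma comp_idr m n (f : op m n) : ocomp f (idop m) = f.
Proof. by apply: val_inj; apply/ffunP => i; rewrite /= !ffunE. Qed.
Lemma compA a b c d (h : op c d) (g : op b c) (f : op a b) :
  ocomp h (ocomp g f) = ocomp (ocomp h g) f.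
Proof. by apply: val_inj; apply/ffunP => i; rewrite /= !ffunE. Qed.

Unset Implicit Arguments.
Record sSet := SSet {
  sx :> nat -> Type;
  act : forall m n, op m n -> sx n -> sx m;
  act_id : forall n (x : sx n), act n n (idop n) x = x;
  act_comp : forall l m n (g : op m n) (f : op l m) (x : sx n),
      act l n (ocomp g f) x = act l m f (act m n g x) }.
Set Implicit Arguments.
Arguments act {s m n}.

Unset Implicit Arguments.
Record sMap (X Y : sSet) := SMap {
  smap :> forall n, X n -> Y n;
  smapP : forall m n (th : op m n) (x : X n), smap m (act th x) = act th (smap n x) }.
Set Implicit Arguments.
Arguments smap {X Y} s {n}.

Definition degenerate (X : sSet) n (x : X n) : Prop :=
  exists m (s : op n m), m < n /\ (forall j : 'I_m.+1, exists i, s i = j) /\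
    exists y : X m, x = act s y.

(* the representing map Delta[n] -> X of x is degreewise injective *)
Definition rep_injective (X : sSet) n (x : X n) : Prop :=
  forall m (a b : op m n), act a x = act b x -> a = b.

Definition nonsingular (X : sSet) : Prop :=
  forall n (x : X n), ~ degenerate x -> rep_injective x.

Unset Implicit Arguments.
Record qrel (X : sSet) := QRel {
  rel :> forall n, X n -> X n -> Prop;
  rel_refl : forall n x, rel n x x;
  rel_sym : forall n x y, rel n x y -> rel n y x;
  rel_trans : forall n x y z, rel n x y -> rel n y z -> rel n x z;
  rel_act : forall m n (th : op m n) x y, rel n x y -> rel m (act th x) (act th y) }.

Set Implicit Arguments.
(* quotient X/R: simplices are the equivalence classes *)
Definition qsx (X : sSet) (R : qrel X) n := { P : X n -> Prop | exists x, P = R n x }.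

Lemma qsx_eq (X : sSet) (R : qrel X) n (P Q : qsx R n) : sval P = sval Q -> P = Q.
Proof.
case: P Q => P hP [Q hQ] /= e; subst Q; f_equal; apply: proof_irrelevance.
Qed.

Lemma qact_lem (X : sSet) (R : qrel X) m n (th : op m n) (P : X n -> Prop) x0 :
  P = R n x0 -> (fun z => exists x, P x /\ R m (act th x) z) = R m (act th x0).
Proof.
move=> ->; apply: functional_extensionality => z; apply: propositional_extensionality.
split=> [[x [h1 h2]]|h]; last by exists x0; split=> //; apply: rel_refl.
by apply: rel_trans h2; apply: rel_act.
Qed.

Lemma qact_proof (X : sSet) (R : qrel X) m n (th : op m n) (P : qsx R n) :
  exists x, (fun z => exists x, sval P x /\ R m (act th x) z) = R m x.
Proof. by case: P => P [x0 e] /=; exists (act th x0); apply: qact_lem. Qed.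

Definition qact (X : sSet) (R : qrel X) m n (th : op m n) (P : qsx R n) : qsx R m :=
  exist _ _ (qact_proof th P).

Definition cls (X : sSet) (R : qrel X) n (x : X n) : qsx R n :=
  exist _ (R n x) (ex_intro _ x erefl).

Lemma qact_cls (X : sSet) (R : qrel X) m n (th : op m n) (x : X n) :
  qact th (cls R x) = cls R (act th x).
Proof. by apply: qsx_eq; rewrite /= (qact_lem th (erefl (R n x))). Qed.

Lemma qact_val (X : sSet) (R : qrel X) m n (th : op m n) (P : qsx R n) x0 :
  sval P = R n x0 -> sval (qact th P) = R m (act th x0).
Proof. by move=> e; rewrite /= (qact_lem th e). Qed.

Lemma qact_id (X : sSet) (R : qrel X) n (P : qsx R n) : qact (idop n) P = P.
Proof.
apply: qsx_eq; case: P => P [x0 e] /=.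
by rewrite (qact_lem (idop n) e) act_id e.
Qed.

Lemma qact_comp (X : sSet) (R : qrel X) l m n (g : op m n) (f : op l m) (P : qsx R n) :
  qact (ocomp g f) P = qact f (qact g P).
Proof.
apply: qsx_eq; case: P => P [x0 e].
rewrite (qact_val (ocomp g f) (P := exist _ P (ex_intro _ x0 e)) e).
by rewrite (qact_val f (qact_val g (P := exist _ P (ex_intro _ x0 e)) e)) act_comp.
Qed.

Definition quot (X : sSet) (R : qrel X) : sSet :=
  @SSet (qsx R) (@qact X R) (@qact_id X R) (@qact_comp X R).

(* index set: quotient maps X -> X/R with X/R non-singular *)
Definition NSQ (X : sSet) := { R : qrel X | nonsingular (quot R) }.

Definition eta0 (X : sSet) n (x : X n) : forall Q : NSQ X, quot (sval Q) n :=
  fun Q => cls (sval Q) x.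

(* DX = image of x |-> (f(x))_f in the product *)
Definition Dsx (X : sSet) n := { p : forall Q : NSQ X, quot (sval Q) n | exists x : X n, p = eta0 x }.

Lemma Dsx_eq (X : sSet) n (p q : Dsx X n) : sval p = sval q -> p = q.
Proof.
case: p q => p hp [q hq] /= e; subst q; f_equal; apply: proof_irrelevance.
Qed.

Lemma Dact_proof (X : sSet) m n (th : op m n) (p : Dsx X n) :
  exists x : X m, (fun Q : NSQ X => act th (sval p Q)) = eta0 x.
Proof.
case: p => p [x e] /=; exists (act th x); subst p.
by apply: functional_extensionality_dep => Q; apply: qact_cls.
Qed.

Definition Dact (X : sSet) m n (th : op m n) (p : Dsx X n) : Dsx X m :=
  exist _ _ (Dact_proof th p).

Lemma Dact_id (X : sSet) n (p : Dsx X n) : Dact (idop n) p = p.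
Proof.
apply: Dsx_eq; apply: functional_extensionality_dep => Q /=; exact: qact_id.
Qed.

Lemma Dact_comp (X : sSet) l m n (g : op m n) (f : op l m) (p : Dsx X n) :
  Dact (ocomp g f) p = Dact f (Dact g p).
Proof.
apply: Dsx_eq; apply: functional_extensionality_dep => Q /=; exact: qact_comp.
Qed.

Definition D (X : sSet) : sSet := @SSet (Dsx X) (@Dact X) (@Dact_id X) (@Dact_comp X).

Definition eta_fun (X : sSet) n (x : X n) : D X n := exist _ (eta0 x) (ex_intro _ x erefl).

Lemma eta_nat (X : sSet) m n (th : op m n) (x : X n) :
  eta_fun (act th x) = act th (eta_fun x).
Proof.
apply: Dsx_eq; apply: functional_extensionality_dep => Q /=.
by rewrite /eta0 qact_cls.
Qed.

Definition etaX (X : sSet) : sMap X (D X) := @SMap X (D X) (@eta_fun X) (@eta_nat X).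

Lemma Delta_id n m (f : op m n) : ocomp f (idop m) = f.
Proof. exact: comp_idr. Qed.
Lemma Delta_comp n l m p (g : op m p) (f : op l m) (x : op p n) :
  ocomp x (ocomp g f) = ocomp (ocomp x g) f.
Proof. exact: compA. Qed.

Definition Delta (n : nat) : sSet :=
  @SSet (fun m => op m n) (fun m p th f => ocomp f th) (@Delta_id n) (@Delta_comp n).

Lemma mu_mono k n (H : k <= n) :
  monob [ffun i : 'I_k.+1 => widen_ord (H : k.+1 <= n.+1) i].
Proof. by apply/monobP => i j; rewrite !ffunE. Qed.
Definition mu k n (H : k <= n) : op k n := Op (mu_mono H).

Definition in_face k n (H : k <= n) m (f : op m n) : Prop :=
  exists a : op m k, f = ocomp (mu H) a.

(* the pushout Delta[0] <- Delta[k] -> Delta[n]: identify all simplices in the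
   image of mu (mu is degreewise injective) *)
Definition collapse_rel k n (H : k <= n) m (f g : op m n) : Prop :=
  f = g \/ (in_face H f /\ in_face H g).

Section Collapse.
Variables (k n : nat) (H : k <= n).
Lemma col_refl m (x : op m n) : collapse_rel H x x.
Proof. by left. Qed.
Lemma col_sym m (x y : op m n) : collapse_rel H x y -> collapse_rel H y x.
Proof. by case=> [->|[a b]]; [left|right]. Qed.
Lemma col_trans m (x y z : op m n) :
  collapse_rel H x y -> collapse_rel H y z -> collapse_rel H x z.
Proof.
case=> [->|[a b]] //; case=> [<-|[c d]]; [by right|by right].
Qed.
Lemma col_act m p (th : op m p) (x y : op p n) :
  collapse_rel H x y -> collapse_rel H (ocomp x th) (ocomp y th).
Proof.
case=> [->|[[a ->] [b ->]]]; first by left.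
by right; split; [exists (ocomp a th)|exists (ocomp b th)]; rewrite compA.
Qed.
End Collapse.

Definition collapse k n (H : k <= n) : qrel (Delta n) :=
  @QRel (Delta n) (@collapse_rel k n H) (@col_refl k n H) (@col_sym k n H)
    (@col_trans k n H) (fun m p th x y => @col_act k n H m p th x y).

Definition Xcol k n (H : k <= n) : sSet := quot (collapse H).

Lemma sk_mono k n : monob [ffun i : 'I_n.+1 => (inord (i - k) : 'I_(n - k).+1)].
Proof.
apply/monobP => i j hij; rewrite !ffunE.
have hb (x : 'I_n.+1) : x - k <= n - k by apply: leq_sub2r; rewrite -ltnS.
by rewrite !inordK ?ltnS ?hb // leq_sub2r.
Qed.
Definition sk k n : op n (n - k) := Op (sk_mono k n).

From Pilot Require Import Defs.
From Stdlib Require Import FunctionalExtensionality PropExtensionality Classical ClassicalEpsilon.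
From mathcomp Require Import all_boot zify.
Set Implicit Arguments. Unset Strict Implicit. Unset Printing Implicit Defensive.

(* The collapse X -> Delta[n-k] induced by [sk] has a section [scol], given by the
   face [sect] : j |-> j + k.  Its kernel quotient embeds into Delta[n-k], hence is
   non-singular, so eta_X separates at least as much as [sk] does.  Conversely, in
   a non-singular quotient the class of the top simplex of Delta[n] is a degeneracy
   [s^* y] of a simplex with injective representing map; since the vertices 0..k
   become equal, [s] collapses them, so [s o sect o sk = s] and every such quotient
   identifies [th] with [sect o sk o th].  Hence DX is the image of X in Delta[n-k]. *)

Lemma op_ext m n (f g : op m n) : f =1 g -> f = g.
Proof. by move=> h; apply: val_inj; apply/ffunP. Qed.

Lemma ocompE l m n (g : op m n) (f : op l m) i : ocomp g f i = g (f i).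
Proof. by rewrite /ocomp /= ffunE. Qed.

Lemma comp_idl m n (f : op m n) : ocomp (idop n) f = f.
Proof. by apply: op_ext => i; rewrite ocompE /= ffunE. Qed.

Lemma cst_mono n (i : 'I_n.+1) : monob [ffun _ : 'I_1 => i].
Proof. by apply/monobP => a b _; rewrite !ffunE. Qed.
Definition cst n (i : 'I_n.+1) : op 0 n := Op (cst_mono i).

Lemma mono_repeat_adjacent m n (f : op m n) (a b : 'I_m.+1) : a < b -> f a = f b ->
  a < m /\ f (inord a) = f (inord a.+1).
Proof.
move=> hab e; have am : a < m by have := ltn_ord b; lia.
split=> //; rewrite inord_val.
have h1 : f a <= f (inord a.+1) by apply: (monobP _ (opP f)); rewrite inordK //; lia.
have h2 : f (inord a.+1) <= f b by apply: (monobP _ (opP f)); rewrite inordK //; lia.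
by rewrite -e in h2; apply: val_inj; apply/eqP; rewrite eqn_leq h1 h2.
Qed.

Lemma op_injective m n (f : op m n) :
  (forall i, i < m -> f (inord i) <> f (inord i.+1)) -> injective f.
Proof.
move=> norep u v e; case: (ltngtP u v) => [lt|lt|/val_inj //].
- by have [hu he] := mono_repeat_adjacent lt e; case: (norep _ hu he).
- by have [hu he] := mono_repeat_adjacent lt (esym e); case: (norep _ hu he).
Qed.

Section Degeneracy.
Variables (m i : nat).

Lemma fdeg_mono :
  monob [ffun j : 'I_m.+1 => (inord (if j <= i then (j : nat) else j.+1) : 'I_m.+2)].
Proof.
apply/monobP => a b hab; rewrite !ffunE.
have := ltn_ord a; have := ltn_ord b => ha hb.
by case: (leqP a i) => h1; case: (leqP b i) => h2; rewrite !inordK; lia.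
Qed.
Definition fdeg : op m m.+1 := Op fdeg_mono.

Hypothesis Hi : i <= m.

Lemma sdeg_mono :
  monob [ffun j : 'I_m.+2 => (inord (if j <= i then (j : nat) else j.-1) : 'I_m.+1)].
Proof.
apply/monobP => a b hab; rewrite !ffunE.
have := ltn_ord a; have := ltn_ord b => ha hb.
by case: (leqP a i) => h1; case: (leqP b i) => h2; rewrite !inordK; lia.
Qed.
Definition sdeg : op m.+1 m := Op sdeg_mono.

Lemma sdeg_surj (j : 'I_m.+1) : exists x, sdeg x = j.
Proof.
exists (fdeg j); apply: val_inj; rewrite /= !ffunE.
have := ltn_ord j => hj.
by case: (leqP j i) => h1; rewrite !inordK; try lia; case: ifP; lia.
Qed.

Lemma fdeg_sdeg n (f : op m.+1 n) : f (inord i) = f (inord i.+1) ->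
  ocomp (ocomp f fdeg) sdeg = f.
Proof.
move=> e; apply: op_ext => j; rewrite !ocompE /= !ffunE.
have := ltn_ord j => hj.
case: (leqP j i) => h1.
  by rewrite inordK ?h1 ?inord_val //; lia.
rewrite inordK; last lia.
case: (leqP j.-1 i) => h2.
  have -> : (j : nat) = i.+1 by lia.
  by rewrite /= e; congr (f _); apply: val_inj; rewrite /= inordK; lia.
by congr (f _); apply: val_inj; rewrite /= inordK; lia.
Qed.
End Degeneracy.

Lemma nonsingular_rep_injective_factor (Y : sSet) : nonsingular Y ->
  forall n (z : Y n), exists p (s : op n p) (y : Y p), z = act s y /\ rep_injective y.
Proof.
move=> ns; elim/ltn_ind => n IH z.
case: (classic (degenerate z)) => [[m [s [hm [_ [y ->]]]]] | nd].
  have [p [s2 [y2 [-> inj]]]] := IH m hm y.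
  by exists p, (ocomp s2 s), y2; rewrite act_comp.
by exists n, (idop n), z; rewrite act_id; split=> //; apply: ns.
Qed.

Lemma scomp_nat (X Y Z : sSet) (g : sMap Y Z) (f : sMap X Y) m n (th : op m n) x :
  g _ (f _ (act th x)) = act th (g _ (f _ x)).
Proof. by rewrite !smapP. Qed.
Definition scomp (X Y Z : sSet) (g : sMap Y Z) (f : sMap X Y) : sMap X Z :=
  @SMap X Z (fun n x => g n (f n x)) (@scomp_nat X Y Z g f).

Definition Dmap n p (g : op n p) : sMap (Delta n) (Delta p) :=
  @SMap (Delta n) (Delta p) (fun m f => ocomp g f) (fun l m th f => Defs.compA g f th).

Section InjectiveIntoDelta.
Variables (Y : sSet) (N : nat) (G : sMap Y (Delta N)).
Hypothesis G_inj : forall m, injective (@smap _ _ G m).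

Lemma degenerate_of_repeat m (x : Y m.+1) i : i <= m ->
  (G _ x : op m.+1 N) (inord i) = (G _ x : op m.+1 N) (inord i.+1) -> degenerate x.
Proof.
move=> hi e; exists m, (sdeg hi); split=> //; split; first exact: sdeg_surj.
exists (act (fdeg m i) x); apply: G_inj.
by rewrite !smapP /= fdeg_sdeg.
Qed.

Lemma nonsingular_of_injective_into_Delta : nonsingular Y.
Proof.
move=> n x nd m a b e.
have inj : injective (G _ x : op n N).
  apply: op_injective => i; case: n x nd {a b e} => // n x nd hi rep.
  by apply: nd; apply: (degenerate_of_repeat _ rep).
have := f_equal (@smap _ _ G m) e; rewrite !smapP /= => e'.
by apply: op_ext => j; apply: inj; rewrite -!ocompE e'.
Qed.
End InjectiveIntoDelta.

Section Quotient.
Variables (X : sSet) (R : qrel X).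

Definition qrep n (P : quot R n) : X n :=
  proj1_sig (constructive_indefinite_description _ (proj2_sig P)).

Lemma cls_qrep n (P : quot R n) : cls R (qrep P) = P.
Proof. by apply: qsx_eq; rewrite /qrep; case: constructive_indefinite_description. Qed.

Lemma clsP n (x y : X n) : cls R x = cls R y <-> R n x y.
Proof.
split=> [/(f_equal sval) /= -> | h]; first exact: rel_refl.
apply: qsx_eq; apply: functional_extensionality => z /=.
apply: propositional_extensionality; split=> hz; apply: rel_trans hz => //.
exact: rel_sym.
Qed.

Definition clsmap : sMap X (quot R) :=
  @SMap X (quot R) (@cls X R) (fun m n th x => esym (qact_cls R th x)).

Variables (Z : sSet) (f : sMap X Z).
Hypothesis f_R : forall n x y, R n x y -> f n x = f n y.

Lemma qlift_cls_fun n (x : X n) : f _ (qrep (cls R x)) = f _ x.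
Proof. by apply: f_R; apply/clsP; rewrite cls_qrep. Qed.

Lemma qlift_nat m n (th : op m n) (P : quot R n) :
  f _ (qrep (act th P)) = act th (f _ (qrep P)).
Proof. by rewrite -{1}(cls_qrep P) /= qact_cls qlift_cls_fun smapP. Qed.

Definition qlift : sMap (quot R) Z := @SMap (quot R) Z (fun n P => f n (qrep P)) qlift_nat.

Lemma qlift_cls n (x : X n) : qlift _ (cls R x) = f _ x.
Proof. exact: qlift_cls_fun. Qed.
End Quotient.

Section Kernel.
Variables (X Z : sSet) (F : sMap X Z).

Lemma ker_act m n (th : op m n) (x y : X n) : F _ x = F _ y -> F _ (act th x) = F _ (act th y).
Proof. by rewrite !smapP => ->. Qed.

Definition kerrel : qrel X :=
  @QRel X (fun n x y => F n x = F n y) (fun n x => erefl) (fun n x y e => esym e)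
    (fun n x y z e1 e2 => etrans e1 e2) ker_act.

Definition kerlift : sMap (quot kerrel) Z := @qlift X kerrel Z F (fun n x y e => e).

Lemma kerlift_inj m : injective (@smap _ _ kerlift m).
Proof. by move=> P Q; rewrite -(cls_qrep P) -(cls_qrep Q) !qlift_cls => e; apply/clsP. Qed.
End Kernel.

Lemma nonsingular_ker_Delta X N (F : sMap X (Delta N)) : nonsingular (quot (kerrel F)).
Proof. exact: (@nonsingular_of_injective_into_Delta _ _ (kerlift F) (@kerlift_inj _ _ F)). Qed.

Section DesingularizationOfSection.
Variables (X : sSet) (N : nat) (F : sMap X (Delta N)) (s : sMap (Delta N) X).
Hypothesis F_s : forall m (q : op m N), F _ (s _ q) = q.
Hypothesis s_F_ident : forall R : qrel X, nonsingular (quot R) ->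
  forall m (x : X m), cls R (s _ (F _ x)) = cls R x.

Definition Drep m (p : D X m) : X m :=
  proj1_sig (constructive_indefinite_description _ (proj2_sig p)).

Lemma eta_Drep m (p : D X m) : etaX X _ (Drep p) = p.
Proof. by apply: Dsx_eq; rewrite /Drep; case: constructive_indefinite_description. Qed.

Lemma F_eq_of_eta_eq m (x y : X m) : etaX X _ x = etaX X _ y -> F _ x = F _ y.
Proof.
pose Qker : NSQ X := exist _ (kerrel F) (@nonsingular_ker_Delta X N F).
by move=> /(f_equal (fun p => sval p Qker)) /clsP.
Qed.

Definition Dlift_fun m (p : D X m) : op m N := F _ (Drep p).

Lemma Dlift_eta m (x : X m) : Dlift_fun (etaX X _ x) = F _ x.
Proof. by apply: F_eq_of_eta_eq; rewrite eta_Drep. Qed.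

Lemma Dlift_nat m n (th : op m n) (p : D X n) :
  Dlift_fun (act th p) = ocomp (Dlift_fun p) th.
Proof. by rewrite -(eta_Drep p) -smapP !Dlift_eta smapP. Qed.

Definition Dlift : sMap (D X) (Delta N) := @SMap (D X) (Delta N) Dlift_fun Dlift_nat.

Lemma D_iso_Delta_of_section :
  exists (psi : sMap (D X) (Delta N)) (psi' : sMap (Delta N) (D X)),
    (forall m (p : D X m), psi' _ (psi _ p) = p) /\
    (forall m (q : Delta N m), psi _ (psi' _ q) = q) /\
    (forall m (x : X m), psi _ (etaX X _ x) = F _ x).
Proof.
exists Dlift, (scomp (etaX X) s); split; last split.
- move=> m p; rewrite -{2}(eta_Drep p); apply: Dsx_eq.
  by apply: functional_extensionality_dep => -[R ns]; apply: s_F_ident.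
- by move=> m q; rewrite /= Dlift_eta F_s.
- exact: Dlift_eta.
Qed.
End DesingularizationOfSection.

Section Collapse.
Variables (k n : nat) (H : k <= n).
Local Notation X := (Xcol H).
Local Notation col := (collapse H).

Lemma sect_mono : monob [ffun j : 'I_(n - k).+1 => (inord (j + k) : 'I_n.+1)].
Proof.
apply/monobP => i j hij; rewrite !ffunE !inordK; try lia.
- by have := ltn_ord j; lia.
- by have := ltn_ord i; lia.
Qed.
Definition sect : op (n - k) n := Op sect_mono.

Lemma sk_sect : ocomp (sk k n) sect = idop (n - k).
Proof.
apply: op_ext => j; rewrite ocompE; apply: val_inj; rewrite /= !ffunE /= !inordK //.
all: by have := ltn_ord j; lia.
Qed.

Lemma sect_skE (j : 'I_n.+1) : (sect (sk k n j) : nat) = if j <= k then k else j.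
Proof. by rewrite /= !ffunE /= !inordK; have := ltn_ord j; try case: ifP; lia. Qed.

Lemma sect_sk_collapsed p (s : op n p) : (forall i : 'I_n.+1, i <= k -> s i = s ord0) ->
  ocomp s (ocomp sect (sk k n)) = s.
Proof.
move=> collapsed; apply: op_ext => j; rewrite !ocompE.
case: (leqP j k) => hj.
  by rewrite !collapsed // sect_skE hj.
by congr (s _); apply: ord_inj; rewrite sect_skE leqNgt hj.
Qed.

Lemma sk_col m (f g : op m n) : col m f g -> ocomp (sk k n) f = ocomp (sk k n) g.
Proof.
case=> [->|[[a ->] [b ->]]] //; apply: op_ext => i; rewrite !ocompE.
apply: val_inj; rewrite /= !ffunE /= !inordK.
- by have := ltn_ord (a i); have := ltn_ord (b i); lia.
- by have := ltn_ord (b i); lia.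
- by have := ltn_ord (a i); lia.
Qed.

Definition Fcol : sMap X (Delta (n - k)) := qlift (f := Dmap (sk k n)) sk_col.

Definition scol : sMap (Delta (n - k)) X := scomp (clsmap col) (Dmap sect).

Lemma Fcol_cls m (th : op m n) : Fcol _ (cls col th) = ocomp (sk k n) th.
Proof. exact: qlift_cls. Qed.

Lemma Fcol_scol m (q : op m (n - k)) : Fcol _ (scol _ q) = q.
Proof. by rewrite -[scol _ q]/(cls col (ocomp sect q)) Fcol_cls Defs.compA sk_sect comp_idl. Qed.

Lemma cls_col_vertex (i : 'I_n.+1) : i <= k -> cls col (cst i) = cls col (cst ord0).
Proof.
move=> hi; apply/clsP; right; split.
  exists (cst (inord i : 'I_k.+1)); apply: op_ext => j.
  by rewrite ocompE /= !ffunE; apply: val_inj; rewrite /= inordK.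
exists (cst (ord0 : 'I_k.+1)); apply: op_ext => j.
by rewrite ocompE /= !ffunE; apply: val_inj.
Qed.

Section NonsingularQuotient.
Variables (R : qrel X) (ns : nonsingular (quot R)).

Definition top_cls : quot R n := cls R (cls col (idop n)).

Lemma cls_cls_col m (th : op m n) :
  cls R (cls col th) = act th top_cls.
Proof. by rewrite /top_cls /= qact_cls /= qact_cls /= comp_idl. Qed.

Lemma factor_collapses_face p (s : op n p) (y : quot R p) :
  rep_injective y -> act s y = top_cls ->
  forall i : 'I_n.+1, i <= k -> s i = s ord0.
Proof.
move=> inj ey i hi.
have := f_equal (@cls X R 0) (cls_col_vertex hi).
rewrite !cls_cls_col -ey -!act_comp => /inj /(f_equal (fun f : op 0 p => f ord0)).
by rewrite !ocompE /= !ffunE.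
Qed.

Lemma scol_Fcol_cls m (x : X m) : cls R (scol _ (Fcol _ x)) = cls R x.
Proof.
have [p [s [y [ey inj]]]] := nonsingular_rep_injective_factor ns top_cls.
rewrite -(cls_qrep x) Fcol_cls /= !cls_cls_col ey -!act_comp !Defs.compA.
by rewrite -(Defs.compA s) sect_sk_collapsed //; apply: factor_collapses_face inj (esym ey).
Qed.
End NonsingularQuotient.
End Collapse.

Theorem mainTheorem8 (k n : nat) (Hk : 0 < k) (Hkn : k < n) :
  exists (psi : sMap (D (Xcol (ltnW Hkn))) (Delta (n - k)))
         (psi' : sMap (Delta (n - k)) (D (Xcol (ltnW Hkn)))),
    (forall m (p : D (Xcol (ltnW Hkn)) m), smap psi' (smap psi p) = p) /\
    (forall m (q : Delta (n - k) m), smap psi (smap psi' q) = q) /\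
    (forall m (th : op m n),
        smap psi (smap (etaX (Xcol (ltnW Hkn))) (cls (collapse (ltnW Hkn)) th))
        = ocomp (sk k n) th).
Proof.
have [psi [psi' [psiK [psi'K psi_eta]]]] :=
  D_iso_Delta_of_section (@Fcol_scol k n (ltnW Hkn)) (@scol_Fcol_cls k n (ltnW Hkn)).
exists psi, psi'; split=> //; split=> // m th.
by rewrite psi_eta Fcol_cls.
Qed.
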